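(* Let $G=(V,E)$ be a graph, let $\overline{E}$ be the set of all unordered pairs of independent edges of $G$, let $k=|\overline{E}|$, and fix an ordering $\sigma(0),\dots,\sigma(k-1)$ of $\overline{E}$. Let $0\le i_\nu\le k$ and let $y_\nu\in\{0,1\}^{i_\nu}$ be a partial candidate solution. Suppose there is an array $y_\mu\in\{0,1\}^{k}$ that extends $y_\nu$ (i.e., $y_\mu[j]=y_\nu[j]$ for all $j<i_\nu$; possibly $y_\mu=y_\nu$ when $i_\nu=k$) and that is a TRUE solution of $G$. Then the graph $G_\nu^*$ is planar.
   Context: An edge $e$ is crossed in $y_\nu$ if $e\in\sigma(j)$ for some $j<i_\nu$ with $y_\nu[j]=1$. An edge $e$ is saturated in $y_\nu$ if at least one of the following holds: (a) $e$ is crossed in $y_\nu$; (b) every index $j$ such that $e\in\sigma(j)$ satisfies $j<i_\nu$; (c) for every pair $\{e,f\}\in\overline{E}$ containing $e$, the other edge $f$ is crossed in $y_\nu$. $G_\nu$ is the subgraph of $G$ formed by the saturated edges (with their end-vertices). $G_\nu^*$ is obtained from $G_\nu$ by, for each $j<i_\nu$ with $y_\nu[j]=1$ and $\sigma(j)=\{(u_1,v_1),(u_2,v_2)\}$, removing these two edges and adding a new dummy vertex adjacent to $u_1,v_1,u_2,v_2$ (this is well defined when every edge lies in at most one such pair, which is the case under the hypothesis of the claim). A binary array $y$ of length $k$ is a TRUE solution of $G$ if (1) every edge of $G$ belongs to at most one pair $\sigma(i)$ with $y[i]=1$, and (2) the graph obtained from $G$ by replacing, for each $i$ with $y[i]=1$,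 the two edges of $\sigma(i)$ by a new dummy vertex adjacent to their four end-vertices, is planar. *)

From Stdlib Require Import Reals.
From mathcomp Require Import all_boot.
Set Implicit Arguments. Unset Strict Implicit. Unset Printing Implicit Defensive.

Definition in01 (t : R) : Prop := Rle R0 t /\ Rle t R1.
Definition open01 (t : R) : Prop := Rlt R0 t /\ Rlt t R1.

Definition simple_arc (g : R -> R * R) : Prop :=
  (forall t, in01 t -> forall eps, Rlt R0 eps -> exists d, Rlt R0 d /\
     forall s, in01 s -> Rlt (Rabs (Rminus s t)) d ->
       Rlt (Rabs (Rminus (fst (g s)) (fst (g t)))) eps /\ Rlt (Rabs (Rminus (snd (g s)) (snd (g t)))) eps)
  /\ (forall s t, in01 s -> in01 t -> g s = g t -> s = t).

Definition planar (W : finType) (VS : {set W}) (ES : {set {set W}}) : Prop :=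
  exists (pos : W -> R * R) (g : {set W} -> R -> R * R),
    {in VS &, injective pos} /\
    (forall e, e \in ES -> simple_arc (g e) /\
       exists u v, [/\ u \in VS, v \in VS, e = [set u; v],
                       g e R0 = pos u & g e R1 = pos v]) /\
    (forall e w t, e \in ES -> w \in VS -> open01 t -> g e t <> pos w) /\
    (forall e f s t, e \in ES -> f \in ES -> e <> f -> open01 s -> open01 t ->
       g e s <> g f t).

Definition indep_pairs (V : finType) (E : {set {set V}}) : {set {set {set V}}} :=
  [set p | [exists e in E, exists f in E, [disjoint e & f] && (p == [set e; f])]].

Section Cross.
Variables (V : finType) (k : nat) (sigma : 'I_k -> {set {set V}}).

(* Starting from the graph (VB, B), for every selected index j remove the two
   edges of sigma j and add a dummy vertex (inr j) adjacent to their four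
   end-vertices. *)
Definition cg_vertices (VB : {set V}) (sel : 'I_k -> bool) : {set (V + 'I_k)} :=
  [set @inl V 'I_k v | v in VB] :|: [set @inr V 'I_k j | j in [set j | sel j]].

Definition cg_edges (B : {set {set V}}) (sel : 'I_k -> bool) : {set {set (V + 'I_k)}} :=
  [set [set @inl V 'I_k v | v in e] | e : {set V} in
       [set e in B | ~~ [exists j, sel j && (e \in sigma j)]]]
  :|: \bigcup_(j | sel j) [set [set @inr V 'I_k j; @inl V 'I_k u] | u in cover (sigma j)].

Definition true_solution (E : {set {set V}}) (y : 'I_k -> bool) : Prop :=
  (forall e, e \in E -> #|[set j | y j && (e \in sigma j)]| <= 1) /\
  planar (cg_vertices setT y) (cg_edges E y).

(* partial candidate y_nu, of length i_nu = size ynu *)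
Definition ysel (ynu : seq bool) (j : 'I_k) : bool := (j < size ynu) && nth false ynu j.

Definition crossed (ynu : seq bool) (e : {set V}) : bool :=
  [exists j, ysel ynu j && (e \in sigma j)].

Definition saturated (E : {set {set V}}) (ynu : seq bool) (e : {set V}) : bool :=
  [|| crossed ynu e,
      [forall j, (e \in sigma j) ==> (j < size ynu)]
    | [forall p in indep_pairs E,
         (e \in p) ==> [forall f in p, (f != e) ==> crossed ynu f]]].

Definition Gnu_edges (E : {set {set V}}) (ynu : seq bool) : {set {set V}} :=
  [set e in E | saturated E ynu e].
Definition Gnu_vertices (E : {set {set V}}) (ynu : seq bool) : {set V} :=
  cover (Gnu_edges E ynu).

Definition Gstar_vertices (E : {set {set V}}) (ynu : seq bool) :=
  cg_vertices (Gnu_vertices E ynu) (ysel ynu).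
Definition Gstar_edges (E : {set {set V}}) (ynu : seq bool) :=
  cg_edges (Gnu_edges E ynu) (ysel ynu).

End Cross.

(* A TRUE solution y_mu gives a planar drawing of the graph G_mu^* obtained from all of G by
   replacing the crossings selected by y_mu.  G_nu^* is a subgraph of G_mu^*: its dummy
   vertices are among those of y_mu since y_mu extends y_nu, and a saturated edge that
   y_nu leaves uncrossed is not crossed by y_mu either.  For the last point, if y_mu crossed
   such an edge e through a pair {e, f}, then f would be crossed in y_nu through another
   pair, so f would lie in two pairs selected by y_mu, which a TRUE solution forbids.
   Restricting the drawing of G_mu^* to G_nu^* proves planarity. *)
From mathcomp Require Import all_boot.

Set Implicit Arguments.
Unset Strict Implicit.
Unset Printing Implicit Defensive.

Lemma planar_subgraph (W : finType) (VS VS' : {set W}) (ES ES' : {set {set W}}) :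
  VS' \subset VS -> ES' \subset ES -> {in ES', forall e : {set W}, e \subset VS'} ->
  planar VS ES -> planar VS' ES'.
Proof.
move=> /subsetP sV /subsetP sE sEV [pos [g [pos_inj [arcs [avoid disj]]]]].
exists pos, g; split; first by move=> x y /sV xV /sV yV; apply: pos_inj.
split.
  move=> e eE'; have [arc [u [v [uV vV e_uv gu gv]]]] := arcs e (sE e eE').
  have /subsetP eV' := sEV _ eE'.
  by split=> //; exists u, v; split; rewrite // eV' // e_uv !inE eqxx ?orbT.
split; first by move=> e w t /sE eE /sV wV; apply: avoid.
by move=> e f s t /sE eE /sE fE; apply: disj.
Qed.

Section IndependentPairs.

Variables (V : finType) (E : {set {set V}}).

Lemma indep_pairsP p :
  reflect (exists e f, [/\ e \in E, f \in E, [disjoint e & f] & p = [set e; f]])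
          (p \in indep_pairs E).
Proof.
rewrite inE; apply: (iffP existsP) => [[e /andP [eE /existsP [f]]] | [e [f [eE fE ef ->]]]].
  by case/and3P=> fE ef /eqP ->; exists e, f.
by exists e; rewrite eE; apply/existsP; exists f; rewrite fE ef eqxx.
Qed.

Lemma indep_pair_sub p : p \in indep_pairs E -> p \subset E.
Proof.
by case/indep_pairsP=> e [f [eE fE _ ->]]; apply/subsetP=> x /set2P [] ->.
Qed.

Lemma indep_pair_other p e :
  set0 \notin E -> p \in indep_pairs E -> e \in p -> exists2 f, f \in p & f != e.
Proof.
move=> E_ne0 /indep_pairsP [a [b [aE bE ab ->]]].
have a_ne_b : a != b.
  apply: contraNneq E_ne0 => a_b; move: ab; rewrite -a_b -setI_eq0 setIid => /eqP a0.
  by rewrite -a0.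
by case/set2P=> ->; [exists b; rewrite 1?eq_sym | exists a]; rewrite ?inE ?eqxx ?orbT.
Qed.

End IndependentPairs.

Section CrossingGraph.

Variables (V : finType) (k : nat) (sigma : 'I_k -> {set {set V}}).

Lemma cg_vertices_subset (VB VB' : {set V}) (sel sel' : 'I_k -> bool) :
  VB \subset VB' -> (forall j, sel j -> sel' j) ->
  cg_vertices VB sel \subset cg_vertices VB' sel'.
Proof.
move=> /subsetP sVB ssel; apply/subsetP=> x; rewrite !in_setU.
case/orP=> /imsetP [y y_in ->]; apply/orP; [left | right]; apply/imsetP; exists y => //.
  exact: sVB.
by move: y_in; rewrite !inE => /ssel.
Qed.

Lemma cg_edges_subset (B B' : {set {set V}}) (sel sel' : 'I_k -> bool) :
  (forall j, sel j -> sel' j) ->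
  {in B, forall e : {set V}, ~~ [exists j, sel j && (e \in sigma j)] ->
           e \in B' /\ ~~ [exists j, sel' j && (e \in sigma j)]} ->
  cg_edges sigma B sel \subset cg_edges sigma B' sel'.
Proof.
move=> ssel sB; apply/subsetP=> x; rewrite !inE.
case/orP=> [/imsetP [e] | /bigcupP [j sel_j x_in]]; last first.
  by apply/orP; right; apply/bigcupP; exists j; first exact: ssel.
rewrite inE => /andP [eB e_unc] ->; have [eB' e_unc'] := sB e eB e_unc.
by apply/orP; left; apply/imsetP; exists e; rewrite ?inE ?eB'.
Qed.

Lemma cg_edges_sub_vertices (B : {set {set V}}) (sel : 'I_k -> bool) :
  (forall j, sel j -> sigma j \subset B) ->
  {in cg_edges sigma B sel, forall x : {set V + 'I_k}, x \subset cg_vertices (cover B) sel}.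
Proof.
move=> sigmaB x; rewrite in_setU => x_in; apply/subsetP=> z; rewrite in_setU.
case/orP: x_in => [/imsetP [e] | /bigcupP [j sel_j /imsetP [u u_in ->]]].
  rewrite inE => /andP [eB _] -> /imsetP [v ve ->].
  by apply/orP; left; apply/imsetP; exists v => //; apply/bigcupP; exists e.
case/bigcupP: u_in => f f_in uf /set2P [] ->; apply/orP.
  by right; apply/imsetP; exists j; rewrite ?inE.
left; apply/imsetP; exists u => //; apply/bigcupP; exists f => //.
exact: subsetP (sigmaB j sel_j) f f_in.
Qed.

Lemma ysel_extension (ynu : seq bool) (y : 'I_k -> bool) :
  (forall j : 'I_k, j < size ynu -> y j = nth false ynu j) ->
  forall j, ysel ynu j -> y j.
Proof. by move=> ext j /andP [j_lt nth_j]; rewrite ext. Qed.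

Variable E : {set {set V}}.
Hypothesis E_ne0 : set0 \notin E.
Hypothesis sigma_indep : forall j, sigma j \in indep_pairs E.

Lemma sigma_sub j : sigma j \subset E.
Proof. exact: indep_pair_sub (sigma_indep j). Qed.

Lemma saturated_uncrossed (ynu : seq bool) (y : 'I_k -> bool) e :
  {in E, forall f, #|[set j | y j && (f \in sigma j)]| <= 1} ->
  (forall j : 'I_k, j < size ynu -> y j = nth false ynu j) ->
  saturated sigma E ynu e -> ~~ crossed sigma ynu e ->
  ~~ [exists j, y j && (e \in sigma j)].
Proof.
move=> y_once ext sat e_unc; apply/existsP=> [[j /andP [y_j e_j]]].
have e_cr_j : ysel ynu j -> crossed sigma ynu e.
  by move=> ysel_j; apply/existsP; exists j; rewrite ysel_j.
case/or3P: sat => [e_cr | /forallP /(_ j) /implyP /(_ e_j) j_lt | /forallP sat].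
- by rewrite e_cr in e_unc.
- by move: e_unc; rewrite e_cr_j // /ysel j_lt -ext.
have [f f_j f_ne_e] := indep_pair_other E_ne0 (sigma_indep j) e_j.
move: (sat (sigma j)); rewrite sigma_indep e_j /= => /forallP /(_ f).
rewrite f_j f_ne_e /= => /existsP [j' /andP [ysel_j' f_j']].
have /card_le1_eqP j_j' := y_once f (subsetP (sigma_sub j) f f_j).
have j'_j : j' = j.
  by apply: j_j'; rewrite !inE ?f_j ?f_j' ?y_j ?(ysel_extension ext ysel_j').
by rewrite -j'_j in e_cr_j; rewrite e_cr_j in e_unc.
Qed.

End CrossingGraph.

Theorem lemma3 (V : finType) (E : {set {set V}})
  (HE : forall e, e \in E -> #|e| = 2)
  (sigma : 'I_#|indep_pairs E| -> {set {set V}})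
  (Hsigma_inj : injective sigma)
  (Hsigma : forall j, sigma j \in indep_pairs E)
  (ynu : seq bool) (Hi : size ynu <= #|indep_pairs E|)
  (ymu : 'I_#|indep_pairs E| -> bool)
  (Hext : forall j : 'I_#|indep_pairs E|, j < size ynu -> ymu j = nth false ynu j)
  (Htrue : true_solution sigma E ymu) :
  planar (Gstar_vertices sigma E ynu) (Gstar_edges sigma E ynu).
Proof.
case: Htrue => ymu_once ymu_planar.
have E_ne0 : set0 \notin E by apply/negP => /HE; rewrite cards0.
apply: planar_subgraph ymu_planar.
- exact: cg_vertices_subset (subsetT _) (ysel_extension Hext).
- apply: cg_edges_subset (ysel_extension Hext) _ => e.
  rewrite inE => /andP [eE sat] e_unc; split=> //.
  exact: saturated_uncrossed ymu_once Hext sat e_unc.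
- apply: cg_edges_sub_vertices => j ysel_j; apply/subsetP=> e e_j.
  have e_cr : crossed sigma ynu e by apply/existsP; exists j; rewrite ysel_j.
  by rewrite inE (subsetP (sigma_sub Hsigma j)) //= /saturated e_cr.
Qed.
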